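(* Let $q\in\mathbb{C}$ be generic (in particular $q\neq 0$, $q^2\neq 1$), let $\hbar,c\in\mathbb{C}$, and let $A^c_{\hbar,q}$, $K$, $a$, $\tilde c$, $\tilde v$ be as in the context. Then for every natural number $k$, $$K\tilde v^{k}=q\,\beta_k(q)\Big[\frac{q^{2(k+1)}-1}{q^{2}-1}\,\tilde v^k+a(q^2+1)\frac{q^{2k}-1}{q^{2}-1}\,\tilde v^{k-1}-\tilde c\,q^2\,\frac{q^{2(k-1)}-1}{q^{2}-1}\,\tilde v^{k-2}\Big],$$ where $\beta_k(q)=\dfrac{q^{2k}-1}{q^{2k-1}(q^{2}-1)}$ and, by convention, $\tilde v^{-1}=\tilde v^{-2}=0$.
   Context: $U_q(sl(2))$ is the algebra generated by $E_+,E_-,X,Y$ with relations $E_{\pm}X=q^{\pm1}XE_{\pm}$, $E_{\pm}Y=q^{\mp1}YE_{\pm}$, $E_+E_-=E_-E_+=1$, $XY-YX=\frac{E_+^2-E_-^2}{q-q^{-1}}$, with coproduct $\Delta(X)=E_-\otimes X+X\otimes E_+$, $\Delta(Y)=E_-\otimes Y+Y\otimes E_+$, $\Delta(E_\pm)=E_\pm\otimes E_\pm$. The quantum Casimir is $K=\frac{q}{2}(XY+YX)+\frac{q^2(1+q^2)}{2(1-q^2)^2}(E_+^2+E_-^2-2)$. Let $\mathbf V$ be the 3-dimensional $U_q(sl(2))$-module with basis $u,v,w$ and action $E_\pm u=q^{\pm1}u$, $E_\pm v=v$, $E_\pm w=q^{\mp1}w$, $Xu=0$, $Xv=-(q+q^{-1})u$,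 $Xw=v$, $Yu=-v$, $Yv=(q+q^{-1})w$, $Yw=0$. The algebra $A^c_{\hbar,q}$ is the quotient of the tensor algebra $T(\mathbf V)$ by the two-sided ideal generated by $(q^2+1)uw+vv+\frac{q^2+1}{q^2}wu-c$, $q^2uv-vu+\hbar u$, $(q^2+1)(uw-wu)+(1-q^2)vv-\hbar v$, $-q^2vw+wv-\hbar w$ (products are tensor products). $U_q(sl(2))$ acts on $T(\mathbf V)$ and on $A^c_{\hbar,q}$ via the coproduct (i.e. $Z(fg)=\sum Z_{(1)}(f)Z_{(2)}(g)$ for $\Delta Z=\sum Z_{(1)}\otimes Z_{(2)}$), so $K$ acts as a linear operator on $A^c_{\hbar,q}$. Set $a=\hbar(1-q^2)^{-1}$, $\tilde c=c-a^2$, $\tilde v=v-a\in A^c_{\hbar,q}$, and $\tilde v^k$ denotes the $k$-th power of $\tilde v$ in $A^c_{\hbar,q}$ ($\tilde v^0=1$). *)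

From HB Require Import structures.
From mathcomp Require Import all_boot all_order all_algebra.
From mathcomp Require Import complex Rstruct.
From Stdlib Require Rdefinitions.
Set Implicit Arguments. Unset Strict Implicit. Unset Printing Implicit Defensive.
Import Order.TTheory GRing.Theory Num.Theory.
Local Open Scope ring_scope.

Notation CC := (Rdefinitions.R[i]).

(* Basis letters: u = 0, v = 1, w = 2. A word is a basis tensor x1 (x) ... (x) xn. *)
Definition word := seq 'I_3.
Definition lu : 'I_3 := @Ordinal 3 0 isT.
Definition lv : 'I_3 := @Ordinal 3 1 isT.
Definition lw : 'I_3 := @Ordinal 3 2 isT.

Section TensorAlgebra.
Variable F : fieldType.

(* An element of T(V) is represented by a formal finite linear combination of words;
   two representatives denote the same tensor iff all their coefficients agree. *)
Definition tens := seq (F * word).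
Definition tcoef (t : tens) (x : word) : F := \sum_(p <- t | p.2 == x) p.1.
Definition teq (t1 t2 : tens) : Prop := forall x, tcoef t1 x = tcoef t2 x.

Definition tzero : tens := [::].
Definition tone : tens := [:: (1, [::])].
Definition tword (x : word) : tens := [:: (1, x)].
Definition tlet (i : 'I_3) : tens := tword [:: i].
Definition tadd (t1 t2 : tens) : tens := t1 ++ t2.
Definition tscale (a : F) (t : tens) : tens := [seq (a * p.1, p.2) | p <- t].
Definition tsub (t1 t2 : tens) : tens := tadd t1 (tscale (-1) t2).
Definition tmul (t1 t2 : tens) : tens :=
  [seq (p.1 * r.1, p.2 ++ r.2) | p <- t1, r <- t2].
Definition tpow (t : tens) (k : nat) : tens := iter k (tmul t) tone.

(* the ideal of T(V) generated by gs: finite linear combinations of l * g * r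
   (l, r words; an out-of-range index selects the zero tensor) *)
Definition in_ideal (gs : seq tens) (t : tens) : Prop :=
  exists l : seq (F * word * nat * word),
    teq t (flatten [seq tscale z.1.1.1
                      (tmul (tmul (tword z.1.1.2) (nth tzero gs z.1.2)) (tword z.2))
                   | z <- l]).

Variable q : F.

Definition ep (i : 'I_3) : F := if i == lu then q else if i == lv then 1 else q^-1.
Definition em (i : 'I_3) : F := if i == lu then q^-1 else if i == lv then 1 else q.
Definition epw (x : word) : F := \prod_(i <- x) ep i.
Definition emw (x : word) : F := \prod_(i <- x) em i.

Definition Xlet (i : 'I_3) : tens :=
  if i == lu then tzero else if i == lv then tscale (- (q + q^-1)) (tlet lu) else tlet lv.
Definition Ylet (i : 'I_3) : tens :=
  if i == lu then tscale (-1) (tlet lv) else if i == lv then tscale (q + q^-1) (tlet lw)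
  else tzero.

(* action on words via the coproduct Delta(Z) = E_- (x) Z + Z (x) E_+ (Z = X, Y):
   Z (a (x) s) = E_-(a) (x) Z(s) + Z(a) (x) E_+(s); on the unit Z 1 = 0 (counit). *)
Fixpoint Xword (x : word) : tens :=
  match x with
  | [::] => tzero
  | a :: s => tadd (tscale (em a) (tmul (tlet a) (Xword s)))
                   (tscale (epw s) (tmul (Xlet a) (tword s)))
  end.
Fixpoint Yword (x : word) : tens :=
  match x with
  | [::] => tzero
  | a :: s => tadd (tscale (em a) (tmul (tlet a) (Yword s)))
                   (tscale (epw s) (tmul (Ylet a) (tword s)))
  end.

(* linear extensions to T(V); E_pm act group-like: Delta(E) = E (x) E *)
Definition actX (t : tens) : tens := flatten [seq tscale p.1 (Xword p.2) | p <- t].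
Definition actY (t : tens) : tens := flatten [seq tscale p.1 (Yword p.2) | p <- t].
Definition actEp (t : tens) : tens := [seq (p.1 * epw p.2, p.2) | p <- t].
Definition actEm (t : tens) : tens := [seq (p.1 * emw p.2, p.2) | p <- t].

Definition actK (t : tens) : tens :=
  tadd (tscale (q / 2) (tadd (actX (actY t)) (actY (actX t))))
       (tscale (q ^+ 2 * (1 + q ^+ 2) / (2 * (1 - q ^+ 2) ^+ 2))
               (tadd (tadd (actEp (actEp t)) (actEm (actEm t))) (tscale (-2) t))).

Variables (hbar c : F).
Definition gens : seq tens :=
  [::
      tadd (tadd (tadd (tscale (q ^+ 2 + 1) (tword [:: lu; lw])) (tword [:: lv; lv]))
                 (tscale ((q ^+ 2 + 1) / q ^+ 2) (tword [:: lw; lu])))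
           (tscale (- c) tone);
      tadd (tsub (tscale (q ^+ 2) (tword [:: lu; lv])) (tword [:: lv; lu]))
           (tscale hbar (tlet lu));
      tsub (tadd (tscale (q ^+ 2 + 1) (tsub (tword [:: lu; lw]) (tword [:: lw; lu])))
                 (tscale (1 - q ^+ 2) (tword [:: lv; lv])))
           (tscale hbar (tlet lv));
      tsub (tadd (tscale (- q ^+ 2) (tword [:: lv; lw])) (tword [:: lw; lv]))
           (tscale hbar (tlet lw))].

Definition Aeq (t1 t2 : tens) : Prop := in_ideal gens (tsub t1 t2).

Definition aa : F := hbar / (1 - q ^+ 2).
Definition ctilde : F := c - aa ^+ 2.
Definition vtilde : tens := tsub (tlet lv) (tscale aa tone).
Definition vtpow (j : int) : tens :=
  match j with Posz n => tpow vtilde n | Negz _ => tzero end.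

Definition beta (k : nat) : F :=
  (q ^+ (2 * k) - 1) / (q ^ (2 * k%:Z - 1) * (q ^+ 2 - 1)).

Definition rhs (k : nat) : tens :=
  tscale (q * beta k)
    (tsub (tadd (tscale ((q ^ (2 * (k%:Z + 1)) - 1) / (q ^+ 2 - 1)) (vtpow k%:Z))
                (tscale (aa * (q ^+ 2 + 1) * ((q ^ (2 * k%:Z) - 1) / (q ^+ 2 - 1)))
                        (vtpow (k%:Z - 1))))
          (tscale (ctilde * q ^+ 2 * ((q ^ (2 * (k%:Z - 1)) - 1) / (q ^+ 2 - 1)))
                  (vtpow (k%:Z - 2)))).

End TensorAlgebra.

From HB Require Import structures.
From mathcomp Require Import all_boot all_order all_algebra.
From mathcomp Require Import complex Rstruct.
From mathcomp Require Import ring.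
From Stdlib Require Import Setoid Morphisms.
Set Implicit Arguments. Unset Strict Implicit. Unset Printing Implicit Defensive.
Import GRing.Theory Num.Theory.
Local Open Scope ring_scope.

(* X and Y act on
   T(V) as twisted derivations, Z(ab) = E_-(a) Z(b) + Z(a) E_+(b), and they map every
   generator of I into I (on which E_+ and E_- act by scalars), so they descend to the
   quotient.  Since E_+ and E_- fix vt = v - a, the E-part of K vanishes on vt^k and
   K vt^k = q/2 (XY + YX) vt^k.  The relations give vt u = q^2 u vt and vt w = q^-2 w vt,
   hence X vt^(n+1) = -(q+q^-1) [n+1]_(q^2) u vt^n and Y vt^(n+1) = (q+q^-1) [n+1]_(q^-2)
   w vt^n, where [m]_r = 1 + r + ... + r^(m-1).  Applying the other operator once more
   produces u w vt^(n-1) and w u vt^(n-1); the relations express u w and w u as quadratic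
   polynomials in v = vt + a, so K vt^(n+1) is a combination of vt^(n+1), vt^n and
   vt^(n-1), and comparing coefficients is a rational function identity in q. *)

Section TensorArithmetic.
Variable F : fieldType.
Implicit Types (t A B C : tens F) (x y : word) (a b : F).

Lemma tcoefE t x : tcoef t x = \sum_(p <- t) (if p.2 == x then p.1 else 0).
Proof. by rewrite /tcoef big_mkcond. Qed.

Lemma tcoef0 x : tcoef (tzero F) x = 0.
Proof. by rewrite tcoefE big_nil. Qed.

Lemma tcoef_cons p t x : tcoef (p :: t) x = (if p.2 == x then p.1 else 0) + tcoef t x.
Proof. by rewrite !tcoefE big_cons. Qed.

Lemma tcoefD t1 t2 x : tcoef (tadd t1 t2) x = tcoef t1 x + tcoef t2 x.
Proof. by rewrite !tcoefE big_cat. Qed.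

Lemma tcoefZ a t x : tcoef (tscale a t) x = a * tcoef t x.
Proof.
rewrite !tcoefE big_map big_distrr; apply: eq_bigr => p _ /=.
by case: eqP; rewrite ?mulr0.
Qed.

Lemma tcoefB t1 t2 x : tcoef (tsub t1 t2) x = tcoef t1 x - tcoef t2 x.
Proof. by rewrite tcoefD tcoefZ mulN1r. Qed.

Lemma tcoef_flatten (T : Type) (f : T -> tens F) (s : seq T) x :
  tcoef (flatten (map f s)) x = \sum_(z <- s) tcoef (f z) x.
Proof.
elim: s => [|z s IH] /=; first by rewrite big_nil tcoef0.
by rewrite (tcoefD (f z)) IH big_cons.
Qed.

Lemma tcoef_tmul A B x : tcoef (tmul A B) x =
  \sum_(p <- A) \sum_(r <- B) (if p.2 ++ r.2 == x then p.1 * r.1 else 0).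
Proof. by rewrite tcoefE /tmul big_allpairs_dep. Qed.

Lemma tcoef_word y x : tcoef (tword F y) x = if y == x then 1 else 0.
Proof. by rewrite tcoef_cons tcoef0 addr0. Qed.

Lemma teqP A B : teq A B <-> forall x, tcoef A x = tcoef B x.
Proof. by []. Qed.

Lemma tcoef_notin t x : x \notin map snd t -> tcoef t x = 0.
Proof.
move=> xt; rewrite tcoefE big_seq big1 // => p pt.
by case: eqP => // px; case/negP: xt; rewrite -px map_f.
Qed.

Lemma tcoef_mulr_sum (g : word -> F) t (S : seq word) :
  uniq S -> {subset map snd t <= S} ->
  \sum_(p <- t) p.1 * g p.2 = \sum_(y <- S) tcoef t y * g y.
Proof.
move=> uS; elim: t => [|p t IH] tS.
  by rewrite big_nil big1 // => y _; rewrite tcoef0 mul0r.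
rewrite big_cons IH; last by move=> y yt; apply: tS; rewrite inE yt orbT.
under [in RHS]eq_bigr do rewrite tcoef_cons mulrDl.
rewrite big_split /=; congr (_ + _).
have pS : p.2 \in S by apply: tS; rewrite inE eqxx.
rewrite (bigD1_seq p.2) //= eqxx big1 ?addr0 // => y.
by rewrite eq_sym => /negbTE ->; rewrite mul0r.
Qed.

Lemma teq_sum (g : word -> F) t t' : teq t t' ->
  \sum_(p <- t) p.1 * g p.2 = \sum_(p <- t') p.1 * g p.2.
Proof.
move=> tt'; pose S := undup (map snd t ++ map snd t').
have uS : uniq S by rewrite undup_uniq.
rewrite (@tcoef_mulr_sum g t S uS); last by move=> y yt; rewrite mem_undup mem_cat yt.
rewrite (@tcoef_mulr_sum g t' S uS); last by move=> y yt; rewrite mem_undup mem_cat yt orbT.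
by apply: eq_bigr => y _; rewrite tt'.
Qed.

Lemma teq_supp A B :
  (forall x, x \in map snd A ++ map snd B -> tcoef A x = tcoef B x) -> teq A B.
Proof.
move=> AB x; have [|] := boolP (x \in map snd A ++ map snd B); first exact: AB.
by rewrite mem_cat negb_or => /andP[xA xB]; rewrite !tcoef_notin.
Qed.

Global Instance teq_equiv : Equivalence (@teq F).
Proof.
split; first by move=> t x.
  by move=> t1 t2 e x; rewrite e.
by move=> t1 t2 t3 e1 e2 x; rewrite e1 e2.
Qed.

Global Instance tadd_teq : Proper (@teq F ==> @teq F ==> @teq F) (@tadd F).
Proof. by move=> A A' eA B B' eB x; rewrite !tcoefD eA eB. Qed.

Global Instance tscale_teq : Proper (eq ==> @teq F ==> @teq F) (@tscale F).
Proof. by move=> a _ <- A A' eA x; rewrite !tcoefZ eA. Qed.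

Global Instance tsub_teq : Proper (@teq F ==> @teq F ==> @teq F) (@tsub F).
Proof. by move=> A A' eA B B' eB x; rewrite !tcoefB eA eB. Qed.

Global Instance tmul_teq : Proper (@teq F ==> @teq F ==> @teq F) (@tmul F).
Proof.
move=> A A' eA B B' eB x.
have tmul_l C D : tcoef (tmul C D) x =
    \sum_(p <- C) p.1 * \sum_(r <- D) (if p.2 ++ r.2 == x then r.1 else 0).
  rewrite tcoef_tmul; apply: eq_bigr => p _; rewrite mulr_sumr.
  by apply: eq_bigr => r _; case: ifP; rewrite ?mulr0.
have tmul_r C D : tcoef (tmul C D) x =
    \sum_(r <- D) r.1 * \sum_(p <- C) (if p.2 ++ r.2 == x then p.1 else 0).
  rewrite tcoef_tmul exchange_big; apply: eq_bigr => r _; rewrite mulr_sumr.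
  by apply: eq_bigr => p _; case: ifP; rewrite ?mulr0 // mulrC.
rewrite tmul_l (teq_sum (fun y => \sum_(r <- B) (if y ++ r.2 == x then r.1 else 0)) eA).
rewrite -tmul_l tmul_r.
by rewrite (teq_sum (fun y => \sum_(p <- A') (if p.2 ++ y == x then p.1 else 0)) eB) -tmul_r.
Qed.

Lemma taddC t1 t2 : teq (tadd t1 t2) (tadd t2 t1).
Proof. by move=> x; rewrite !tcoefD addrC. Qed.

Lemma taddA t1 t2 t3 : tadd t1 (tadd t2 t3) = tadd (tadd t1 t2) t3.
Proof. exact: catA. Qed.

Lemma tadd0r t : tadd t (tzero F) = t.
Proof. exact: cats0. Qed.

Lemma tscaleA a b t : teq (tscale a (tscale b t)) (tscale (a * b) t).
Proof. by move=> x; rewrite !tcoefZ mulrA. Qed.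

Lemma tscaleDr a t1 t2 : tscale a (tadd t1 t2) = tadd (tscale a t1) (tscale a t2).
Proof. exact: map_cat. Qed.

Lemma tscaleDl a b t : teq (tscale (a + b) t) (tadd (tscale a t) (tscale b t)).
Proof. by move=> x; rewrite !tcoefD !tcoefZ mulrDl. Qed.

Lemma tscale1 t : teq (tscale 1 t) t.
Proof. by move=> x; rewrite !tcoefZ mul1r. Qed.

Lemma tscale0 t : teq (tscale 0 t) (tzero F).
Proof. by move=> x; rewrite tcoefZ mul0r tcoef0. Qed.

Lemma tmulDl A B C : tmul (tadd A B) C = tadd (tmul A C) (tmul B C).
Proof. exact: allpairs_cat. Qed.

Lemma tmulDr A B C : teq (tmul A (tadd B C)) (tadd (tmul A B) (tmul A C)).
Proof.
move=> x; rewrite tcoefD !tcoef_tmul -big_split /=.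
by apply: eq_bigr => p _; rewrite big_cat.
Qed.

Lemma tmulZl a A B : teq (tmul (tscale a A) B) (tscale a (tmul A B)).
Proof.
move=> x; rewrite tcoefZ !tcoef_tmul big_map mulr_sumr; apply: eq_bigr => p _.
rewrite mulr_sumr; apply: eq_bigr => r _ /=.
by case: ifP; rewrite ?mulr0 ?mulrA.
Qed.

Lemma tmulZr a A B : teq (tmul A (tscale a B)) (tscale a (tmul A B)).
Proof.
move=> x; rewrite tcoefZ !tcoef_tmul mulr_sumr; apply: eq_bigr => p _.
rewrite big_map mulr_sumr; apply: eq_bigr => r _ /=.
by case: ifP; rewrite ?mulr0 // mulrCA.
Qed.

Lemma tmulA A B C : teq (tmul (tmul A B) C) (tmul A (tmul B C)).
Proof.
move=> x; rewrite !tcoef_tmul /tmul big_allpairs_dep; apply: eq_bigr => p _.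
rewrite big_allpairs_dep; apply: eq_bigr => r _; apply: eq_bigr => s _ /=.
by rewrite catA mulrA.
Qed.

Lemma tmul1l t : teq (tmul (tone F) t) t.
Proof.
move=> x; rewrite tcoef_tmul big_cons big_nil addr0 tcoefE.
by apply: eq_bigr => r _ /=; rewrite mul1r.
Qed.

Lemma tmul1r t : teq (tmul t (tone F)) t.
Proof.
move=> x; rewrite tcoef_tmul tcoefE; apply: eq_bigr => p _ /=.
by rewrite big_cons big_nil addr0 cats0 mulr1.
Qed.

Lemma tmul0r t : teq (tmul t (tzero F)) (tzero F).
Proof. by move=> x; rewrite tcoef_tmul tcoef0 big1 // => p _; rewrite big_nil. Qed.

Lemma tpowS t n : tpow t n.+1 = tmul t (tpow t n).
Proof. by []. Qed.

Lemma tmul0l t : tmul (tzero F) t = tzero F.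
Proof. by []. Qed.

Lemma tscale_zero a : tscale a (tzero F) = tzero F.
Proof. by []. Qed.

Lemma tmul_word x y : teq (tmul (tword F x) (tword F y)) (tword F (x ++ y)).
Proof. by move=> z; rewrite tcoef_tmul tcoef_word !big_cons !big_nil /= !addr0 mulr1. Qed.

End TensorArithmetic.

Section LinearMaps.
Variable F : fieldType.
Implicit Types (t A B C : tens F) (x y : word) (a b : F) (L : tens F -> tens F).

Definition tlinear L :=
  [/\ Proper (@teq F ==> @teq F) L,
      forall t1 t2, teq (L (tadd t1 t2)) (tadd (L t1) (L t2)) &
      forall a t, teq (L (tscale a t)) (tscale a (L t))].

Lemma tlinear0 L : tlinear L -> teq (L (tzero F)) (tzero F).
Proof.
case=> LP _ LZ; rewrite -[L _]/(L (tscale 0 (tzero F))) LZ tscale0; reflexivity.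
Qed.

Lemma tdecomp t : teq t (flatten [seq tscale p.1 (tword F p.2) | p <- t]).
Proof.
apply/teqP => x; rewrite tcoef_flatten tcoefE; apply: eq_bigr => p _.
by rewrite tcoefZ tcoef_word; case: eqP; rewrite ?mulr1 ?mulr0.
Qed.

Lemma tlinear_flatten L (T : Type) (f : T -> tens F) (l : seq T) : tlinear L ->
  teq (L (flatten (map f l))) (flatten [seq L (f z) | z <- l]).
Proof.
move=> hL; elim: l => [|z l IH] /=; first exact: tlinear0.
case: hL => LP LD _; rewrite -[f z ++ _]/(tadd _ _) LD IH; reflexivity.
Qed.

Lemma teq_flatten (T : Type) (f g : T -> tens F) (l : seq T) :
  (forall z, teq (f z) (g z)) -> teq (flatten (map f l)) (flatten (map g l)).
Proof.
move=> fg; apply/teqP => x; rewrite !tcoef_flatten.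
by apply: eq_bigr => z _; move/teqP: (fg z).
Qed.

Lemma flatten_ind (P : tens F -> Prop) (T : Type) (f : T -> tens F) (l : seq T) :
  P (tzero F) -> (forall t1 t2, P t1 -> P t2 -> P (tadd t1 t2)) ->
  (forall z, P (f z)) -> P (flatten (map f l)).
Proof. by move=> P0 PD Pf; elim: l => [|z l IH] //=; apply: PD. Qed.

Lemma tlinear_ext L1 L2 : tlinear L1 -> tlinear L2 ->
  (forall x, teq (L1 (tword F x)) (L2 (tword F x))) -> forall t, teq (L1 t) (L2 t).
Proof.
move=> h1 h2 L12 t; have [P1 _ Z1] := h1; have [P2 _ Z2] := h2.
rewrite (tdecomp t) (tlinear_flatten _ _ h1) (tlinear_flatten _ _ h2).
by apply: teq_flatten => p; rewrite Z1 Z2 L12; reflexivity.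
Qed.

Lemma tlinear_ind (P : tens F -> Prop) L :
  Proper (@teq F ==> iff) P -> P (tzero F) ->
  (forall t1 t2, P t1 -> P t2 -> P (tadd t1 t2)) -> (forall a t, P t -> P (tscale a t)) ->
  tlinear L -> (forall x, P (L (tword F x))) -> forall t, P (L t).
Proof.
move=> PP P0 PD PZ hL Pw t; have [LP _ LZ] := hL.
rewrite (tdecomp t) (tlinear_flatten _ _ hL).
by apply: flatten_ind => // p; rewrite LZ; apply: PZ.
Qed.

Lemma tlinear_comp L1 L2 : tlinear L1 -> tlinear L2 -> tlinear (fun t => L1 (L2 t)).
Proof.
move=> [P1 D1 Z1] [P2 D2 Z2]; split.
- by move=> t t' tt'; rewrite tt'; reflexivity.
- by move=> t1 t2; rewrite D2 D1; reflexivity.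
- by move=> a t; rewrite Z2 Z1; reflexivity.
Qed.

Lemma tlinear_add L1 L2 : tlinear L1 -> tlinear L2 -> tlinear (fun t => tadd (L1 t) (L2 t)).
Proof.
move=> [P1 D1 Z1] [P2 D2 Z2]; split.
- by move=> t t' tt'; rewrite tt'; reflexivity.
- move=> t1 t2; rewrite D1 D2 -!taddA; apply: tadd_teq; first reflexivity.
  by rewrite !taddA; apply: tadd_teq; [exact: taddC | reflexivity].
- by move=> a t; rewrite Z1 Z2 tscaleDr; reflexivity.
Qed.

Lemma tlinear_mull C : tlinear (tmul C).
Proof.
split.
- by move=> t t' tt'; rewrite tt'; reflexivity.
- by move=> t1 t2; rewrite tmulDr; reflexivity.
- by move=> a t; rewrite tmulZr; reflexivity.
Qed.

Lemma tlinear_mulr C : tlinear (fun t => tmul t C).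
Proof.
split.
- by move=> t t' tt'; rewrite tt'; reflexivity.
- by move=> t1 t2; rewrite tmulDl; reflexivity.
- by move=> a t; rewrite tmulZl; reflexivity.
Qed.

Definition extlin (phi : word -> tens F) t : tens F :=
  flatten [seq tscale p.1 (phi p.2) | p <- t].

Lemma tcoef_extlin phi t x : tcoef (extlin phi t) x = \sum_(p <- t) p.1 * tcoef (phi p.2) x.
Proof. by rewrite tcoef_flatten; apply: eq_bigr => p _; rewrite tcoefZ. Qed.

Lemma extlin_linear phi : tlinear (extlin phi).
Proof.
split.
- move=> t t' tt'; apply/teqP => x; rewrite !tcoef_extlin.
  exact: (teq_sum (fun y => tcoef (phi y) x) tt').
- by move=> t1 t2; rewrite /extlin /tadd map_cat flatten_cat; reflexivity.
- move=> a t; apply/teqP => x; rewrite tcoefZ !tcoef_extlin big_map mulr_sumr.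
  by apply: eq_bigr => p _ /=; rewrite mulrA.
Qed.

Lemma extlin_word phi x : teq (extlin phi (tword F x)) (phi x).
Proof. by rewrite /extlin /= cats0 tscale1; reflexivity. Qed.

Definition tdiag (f : word -> F) t : tens F := [seq (p.1 * f p.2, p.2) | p <- t].

Lemma tcoef_tdiag f t x : tcoef (tdiag f t) x = f x * tcoef t x.
Proof.
rewrite !tcoefE big_map mulr_sumr; apply: eq_bigr => p _ /=.
by case: eqP => [->|]; rewrite ?mulr0 // mulrC.
Qed.

Lemma tdiag_linear f : tlinear (tdiag f).
Proof.
split.
- by move=> t t' /teqP tt'; apply/teqP => x; rewrite !tcoef_tdiag tt'.
- by move=> t1 t2; rewrite /tdiag /tadd map_cat; reflexivity.
- by move=> a t; apply/teqP => x; rewrite tcoefZ !tcoef_tdiag tcoefZ mulrCA.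
Qed.

Lemma tdiag_word f x : teq (tdiag f (tword F x)) (tscale (f x) (tword F x)).
Proof.
apply/teqP => y; rewrite tcoef_tdiag tcoefZ !tcoef_word.
by case: eqP => [->|]; rewrite ?mulr0.
Qed.

Lemma tdiag_mul f A B : (forall x y, f (x ++ y) = f x * f y) ->
  tdiag f (tmul A B) = tmul (tdiag f A) (tdiag f B).
Proof.
move=> fM; rewrite /tdiag /tmul map_allpairs allpairs_mapl allpairs_mapr.
by apply: eq_allpairs => p r /=; rewrite fM mulrACA.
Qed.

End LinearMaps.

Section TwistedDerivations.
Variables (F : fieldType) (q : F).
Implicit Types (t A B C : tens F) (x y : word) (Z : tens F -> tens F).

Lemma epw_cat x y : epw q (x ++ y) = epw q x * epw q y.
Proof. by rewrite /epw big_cat. Qed.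

Lemma emw_cat x y : emw q (x ++ y) = emw q x * emw q y.
Proof. by rewrite /emw big_cat. Qed.

Fixpoint Zword (Zlet : 'I_3 -> tens F) (x : word) : tens F :=
  match x with
  | [::] => tzero F
  | i :: s => tadd (tscale (em q i) (tmul (tlet F i) (Zword Zlet s)))
                   (tscale (epw q s) (tmul (Zlet i) (tword F s)))
  end.

Lemma Xword_Zword x : Xword q x = Zword (Xlet q) x.
Proof. by elim: x => [|i x IH] //=; rewrite IH. Qed.

Lemma Yword_Zword x : Yword q x = Zword (Ylet q) x.
Proof. by elim: x => [|i x IH] //=; rewrite IH. Qed.

Lemma Zword_cons Zlet i s : Zword Zlet (i :: s) =
  tadd (tscale (em q i) (tmul (tlet F i) (Zword Zlet s)))
       (tscale (epw q s) (tmul (Zlet i) (tword F s))).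
Proof. by []. Qed.

Lemma Zword_cat Zlet x y : teq (Zword Zlet (x ++ y))
  (tadd (tscale (emw q x) (tmul (tword F x) (Zword Zlet y)))
        (tscale (epw q y) (tmul (Zword Zlet x) (tword F y)))).
Proof.
elim: x => [|i x IH].
  rewrite /emw big_nil tmul0l tscale_zero tadd0r tscale1.
  by rewrite -[tword F [::]]/(tone F) tmul1l; reflexivity.
rewrite cat_cons !Zword_cons IH (tmulDr (tlet F i)) tmulDl.
rewrite (tmulZr (emw q x)) (tmulZr (epw q y)) (tmulZl (em q i)) (tmulZl (epw q x)).
rewrite (tscaleDr (em q i)) (tscaleDr (epw q y)) !tscaleA -taddA.
apply: tadd_teq; first by rewrite -tmulA tmul_word /emw big_cons; reflexivity.
apply: tadd_teq; first by rewrite tmulA mulrC; reflexivity.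
by rewrite tmulA tmul_word epw_cat mulrC; reflexivity.
Qed.

Lemma actX_linear : tlinear (actX q). Proof. exact: extlin_linear. Qed.
Lemma actY_linear : tlinear (actY q). Proof. exact: extlin_linear. Qed.
Lemma actEp_linear : tlinear (actEp q). Proof. exact: tdiag_linear. Qed.
Lemma actEm_linear : tlinear (actEm q). Proof. exact: tdiag_linear. Qed.

Global Instance actX_teq : Proper (@teq F ==> @teq F) (actX q).
Proof. by case: actX_linear. Qed.
Global Instance actY_teq : Proper (@teq F ==> @teq F) (actY q).
Proof. by case: actY_linear. Qed.
Global Instance actEp_teq : Proper (@teq F ==> @teq F) (actEp q).
Proof. by case: actEp_linear. Qed.
Global Instance actEm_teq : Proper (@teq F ==> @teq F) (actEm q).
Proof. by case: actEm_linear. Qed.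

Lemma actEp_word x : teq (actEp q (tword F x)) (tscale (epw q x) (tword F x)).
Proof. exact: tdiag_word. Qed.

Lemma actEm_word x : teq (actEm q (tword F x)) (tscale (emw q x) (tword F x)).
Proof. exact: tdiag_word. Qed.

Lemma actEp_mul A B : actEp q (tmul A B) = tmul (actEp q A) (actEp q B).
Proof. exact: tdiag_mul epw_cat. Qed.

Lemma actEm_mul A B : actEm q (tmul A B) = tmul (actEm q A) (actEm q B).
Proof. exact: tdiag_mul emw_cat. Qed.

Lemma twisted_leibniz Z Zlet : tlinear Z ->
    (forall x, teq (Z (tword F x)) (Zword Zlet x)) ->
  forall A B, teq (Z (tmul A B)) (tadd (tmul (actEm q A) (Z B)) (tmul (Z A) (actEp q B))).
Proof.
(* Both sides are linear in A and in B, so it suffices to compare them on words. *)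
move=> hZ Zw A B; have [ZP _ _] := hZ.
apply: (tlinear_ext (tlinear_comp hZ (tlinear_mulr B))
  (tlinear_add (tlinear_comp (tlinear_mulr _) actEm_linear)
               (tlinear_comp (tlinear_mulr _) hZ))) => x.
apply: (tlinear_ext (tlinear_comp hZ (tlinear_mull _))
  (tlinear_add (tlinear_comp (tlinear_mull _) hZ)
               (tlinear_comp (tlinear_mull _) actEp_linear))) => y.
rewrite tmul_word Zw Zword_cat actEm_word actEp_word tmulZl tmulZr -!Zw; reflexivity.
Qed.

Lemma actX_mul A B :
  teq (actX q (tmul A B)) (tadd (tmul (actEm q A) (actX q B)) (tmul (actX q A) (actEp q B))).
Proof.
apply: (twisted_leibniz (Zlet := Xlet q) actX_linear) => x.
by rewrite -Xword_Zword; apply: extlin_word.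
Qed.

Lemma actY_mul A B :
  teq (actY q (tmul A B)) (tadd (tmul (actEm q A) (actY q B)) (tmul (actY q A) (actEp q B))).
Proof.
apply: (twisted_leibniz (Zlet := Ylet q) actY_linear) => x.
by rewrite -Yword_Zword; apply: extlin_word.
Qed.

End TwistedDerivations.

Section Ideal.
Variables (F : fieldType) (gs : seq (tens F)).
Implicit Types (t A B C : tens F) (a : F).
Local Notation I := (in_ideal gs).

Definition gen_term (z : F * word * nat * word) : tens F :=
  tscale z.1.1.1 (tmul (tmul (tword F z.1.1.2) (nth (tzero F) gs z.1.2)) (tword F z.2)).

Lemma in_idealE t : I t <-> exists l, teq t (flatten (map gen_term l)).
Proof. by []. Qed.

Global Instance in_ideal_teq : Proper (@teq F ==> iff) I.
Proof.
move=> t t' tt'; rewrite !in_idealE.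
by split=> -[l e]; exists l; [rewrite -tt' | rewrite tt'].
Qed.

Lemma in_ideal_eq t t' : teq t t' -> I t -> I t'.
Proof. by move=> ->. Qed.

Lemma in_ideal0 : I (tzero F).
Proof. by exists [::]; reflexivity. Qed.

Lemma in_idealD t1 t2 : I t1 -> I t2 -> I (tadd t1 t2).
Proof.
move=> [l1 e1] [l2 e2]; exists (l1 ++ l2).
by rewrite map_cat flatten_cat -[_ ++ _]/(tadd _ _) e1 e2; reflexivity.
Qed.

Lemma in_idealZ a t : I t -> I (tscale a t).
Proof.
move=> [l e]; exists [seq (a * z.1.1.1, z.1.1.2, z.1.2, z.2) | z <- l].
rewrite e; apply/teqP => x; rewrite tcoefZ !tcoef_flatten big_map mulr_sumr.
by apply: eq_bigr => z _; rewrite !tcoefZ mulrA.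
Qed.

Lemma in_ideal_flatten (T : Type) (f : T -> tens F) (l : seq T) :
  (forall z, I (f z)) -> I (flatten (map f l)).
Proof. by move=> If; apply: flatten_ind => //; [exact: in_ideal0 | exact: in_idealD]. Qed.

Lemma in_ideal_gen_term z : I (gen_term z).
Proof. by exists [:: z]; rewrite /= cats0; reflexivity. Qed.

Lemma in_ideal_gen i : I (nth (tzero F) gs i).
Proof.
have := in_ideal_gen_term (1, [::], i, [::]).
by rewrite /gen_term /= tscale1 -[tword F [::]]/(tone F) tmul1l tmul1r.
Qed.

Lemma in_ideal_mulr t C : I t -> I (tmul t C).
Proof.
move=> [l ->]; rewrite (tlinear_flatten _ _ (tlinear_mulr C)).
apply: in_ideal_flatten => z.
apply: (tlinear_ind in_ideal_teq in_ideal0 in_idealD in_idealZ (tlinear_mull _)) => y.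
apply: (in_ideal_eq _ (in_ideal_gen_term (z.1.1.1, z.1.1.2, z.1.2, z.2 ++ y))).
by rewrite /gen_term /= tmulZl (tmulA _ (tword F z.2)) tmul_word; reflexivity.
Qed.

Lemma in_ideal_mull t C : I t -> I (tmul C t).
Proof.
move=> [l ->]; rewrite (tlinear_flatten _ _ (tlinear_mull C)).
apply: in_ideal_flatten => z.
apply: (tlinear_ind in_ideal_teq in_ideal0 in_idealD in_idealZ (tlinear_mulr _)) => y.
apply: (in_ideal_eq _ (in_ideal_gen_term (z.1.1.1, y ++ z.1.1.2, z.1.2, z.2))).
by rewrite /gen_term /= tmulZr -!(tmulA (tword F y)) tmul_word; reflexivity.
Qed.

Lemma in_ideal_twisted (q : F) (Z : tens F -> tens F) : tlinear Z ->
    (forall A B, teq (Z (tmul A B)) (tadd (tmul (actEm q A) (Z B)) (tmul (Z A) (actEp q B)))) ->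
    (forall i, [/\ I (Z (nth (tzero F) gs i)), I (actEp q (nth (tzero F) gs i))
                 & I (actEm q (nth (tzero F) gs i))]) ->
  forall t, I t -> I (Z t).
Proof.
move=> hZ Zmul Igs t [l tl]; have [ZP _ ZZ] := hZ; rewrite tl.
rewrite (tlinear_flatten _ _ hZ); apply: in_ideal_flatten => z.
have [IZ IEp IEm] := Igs z.1.2.
rewrite /gen_term ZZ Zmul; apply: in_idealZ; apply: in_idealD.
  by apply: in_ideal_mulr; rewrite actEm_mul; apply: in_ideal_mull.
by apply: in_ideal_mulr; rewrite Zmul; apply: in_idealD; apply: in_ideal_mull.
Qed.

End Ideal.

Section Quotient.
Variables (F : fieldType) (q hbar c : F).
Implicit Types (t A B : tens F) (k : F).
Local Notation I := (in_ideal (gens q hbar c)).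
Local Notation AE := (Aeq q hbar c).

Lemma AeqE t1 t2 : AE t1 t2 <-> I (tsub t1 t2).
Proof. by []. Qed.

Global Instance Aeq_equiv : Equivalence AE.
Proof.
split.
- move=> t; rewrite AeqE; apply: in_ideal_eq (in_ideal0 _).
  by apply/teqP => x; rewrite tcoef0 tcoefB subrr.
- move=> t1 t2; rewrite !AeqE => /(in_idealZ (-1)); apply: in_ideal_eq.
  by apply/teqP => x; rewrite !(tcoefB, tcoefZ); ring.
- move=> t1 t2 t3; rewrite !AeqE => I12 I23; apply: in_ideal_eq (in_idealD I12 I23).
  by apply/teqP => x; rewrite !(tcoefB, tcoefD); ring.
Qed.

Global Instance Aeq_teq : Proper (@teq F ==> @teq F ==> iff) AE.
Proof. by move=> A A' eA B B' eB; rewrite !AeqE eA eB. Qed.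

Lemma teq_Aeq t t' : teq t t' -> AE t t'.
Proof. by move=> ->; reflexivity. Qed.

Global Instance tadd_Aeq : Proper (AE ==> AE ==> AE) (@tadd F).
Proof.
move=> A A' eA B B' eB; rewrite AeqE; apply: in_ideal_eq (in_idealD eA eB).
by apply/teqP => x; rewrite !(tcoefB, tcoefD); ring.
Qed.

Global Instance tscale_Aeq : Proper (eq ==> AE ==> AE) (@tscale F).
Proof.
move=> k _ <- A A' eA; rewrite AeqE; apply: in_ideal_eq (in_idealZ k eA).
by apply/teqP => x; rewrite !(tcoefB, tcoefZ); ring.
Qed.

Global Instance tmul_Aeq : Proper (AE ==> AE ==> AE) (@tmul F).
Proof.
move=> A A' eA B B' eB; rewrite AeqE.
apply: in_ideal_eq (in_idealD (in_ideal_mulr B eA) (in_ideal_mull A' eB)).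
rewrite /tsub tmulDl tmulDr tmulZl tmulZr.
by apply/teqP => x; rewrite !(tcoefB, tcoefD, tcoefZ); ring.
Qed.

End Quotient.

Lemma geom_sumS (R : nzRingType) (r : R) n :
  \sum_(i < n.+1) r ^+ i = 1 + r * \sum_(i < n) r ^+ i.
Proof.
rewrite big_ord_recl expr0 mulr_sumr; congr (_ + _).
by apply: eq_bigr => i _; rewrite exprS.
Qed.

Lemma geom_sumE (R : fieldType) (r : R) n :
  r != 1 -> \sum_(i < n) r ^+ i = (r ^+ n - 1) / (r - 1).
Proof. by move=> r_neq1; rewrite subrX1 mulrAC divff ?mul1r // subr_eq0. Qed.

Lemma exprz_2n (R : unitRingType) (x : R) (n : nat) : x ^ (2 * n%:Z) = (x ^+ 2) ^+ n.
Proof. by rewrite -exprz_exp -!exprnP. Qed.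

Lemma exprz_2n_sub1 (R : fieldType) (x : R) (n : nat) :
  x != 0 -> x ^ (2 * n%:Z - 1) = (x ^+ 2) ^+ n / x.
Proof. by move=> x_neq0; rewrite expfzDr // exprz_2n exprN1. Qed.

Local Ltac case_mem := match goal with
  | |- is_true (_ || _) -> _ => case/orP; [move/eqP -> | case_mem]
  | |- is_true (_ == _) -> _ => move/eqP ->
  | |- _ => by []
  end.

Section Casimir.
Variables (F : fieldType) (q hbar c : F).
Hypotheses (q_neq0 : q != 0) (q2_neq1 : 1 - q ^+ 2 != 0) (q2_neqN1 : q ^+ 2 + 1 != 0).
Hypothesis two_neq0 : (2 : F) != 0.
Local Notation G i := (nth (tzero F) (gens q hbar c) i).
Local Notation I := (in_ideal (gens q hbar c)).
Local Notation AE := (Aeq q hbar c).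
Local Notation s := (q + q^-1).
Local Notation u := (tlet F lu).
Local Notation v := (tlet F lv).
Local Notation w := (tlet F lw).
Local Notation vt := (vtilde q hbar).
Local Notation a := (aa q hbar).

Local Ltac solve_teq := apply: teq_supp => x;
  rewrite /gens /tsub /tadd /tscale /tmul /tword /tlet /tone /tzero /vtilde;
  rewrite /actX /actY /actEp /actEm /Xlet /Ylet /=;
  rewrite ?inE; case_mem; rewrite !tcoef_cons tcoef0 /=;
  rewrite /epw /emw ?big_cons ?big_nil /ep /em /aa /=;
  by field; rewrite ?q_neq0 ?q2_neq1 ?q2_neqN1.

Lemma actEp_gens : [/\ teq (actEp q (G 0)) (G 0), teq (actEp q (G 1)) (tscale q (G 1)),
  teq (actEp q (G 2)) (G 2) & teq (actEp q (G 3)) (tscale q^-1 (G 3))].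
Proof. by split; solve_teq. Qed.

Lemma actEm_gens : [/\ teq (actEm q (G 0)) (G 0), teq (actEm q (G 1)) (tscale q^-1 (G 1)),
  teq (actEm q (G 2)) (G 2) & teq (actEm q (G 3)) (tscale q (G 3))].
Proof. by split; solve_teq. Qed.

Lemma actX_gens : [/\ teq (actX q (G 0)) (tzero F), teq (actX q (G 1)) (tzero F),
  teq (actX q (G 2)) (tscale s (G 1)) & teq (actX q (G 3)) (G 2)].
Proof. by split; solve_teq. Qed.

Lemma actY_gens : [/\ teq (actY q (G 0)) (tzero F), teq (actY q (G 1)) (G 2),
  teq (actY q (G 2)) (tscale s (G 3)) & teq (actY q (G 3)) (tzero F)].
Proof. by split; solve_teq. Qed.

Lemma gens_stable i :
  [/\ I (actX q (G i)), I (actY q (G i)), I (actEp q (G i)) & I (actEm q (G i))].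
Proof.
have I0 := in_ideal0 (gens q hbar c).
have IG j : I (G j) := in_ideal_gen _ j.
have IGZ k j : I (tscale k (G j)) := in_idealZ k (IG j).
have [x0 x1 x2 x3] := actX_gens; have [y0 y1 y2 y3] := actY_gens.
have [p0 p1 p2 p3] := actEp_gens; have [m0 m1 m2 m3] := actEm_gens.
case: i => [|[|[|[|i]]]].
- by split; [rewrite x0 | rewrite y0 | rewrite p0 | rewrite m0].
- by split; [rewrite x1 | rewrite y1 | rewrite p1 | rewrite m1].
- by split; [rewrite x2 | rewrite y2 | rewrite p2 | rewrite m2].
- by split; [rewrite x3 | rewrite y3 | rewrite p3 | rewrite m3].
by rewrite nth_default //; split.
Qed.

Lemma vt_u : AE (tmul vt u) (tscale (q ^+ 2) (tmul u vt)).
Proof. by apply: (in_ideal_eq _ (in_idealZ (-1) (in_ideal_gen _ 1))); solve_teq. Qed.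

Lemma vt_w : AE (tmul vt w) (tscale (q ^- 2) (tmul w vt)).
Proof. by apply: (in_ideal_eq _ (in_idealZ (- q ^- 2) (in_ideal_gen _ 3))); solve_teq. Qed.

(* u w and w u are obtained by solving the relations G 0 and G 2 for them. *)
Lemma u_w : AE (tmul u w) (tscale ((q ^+ 2 + 1) ^- 2)
  (tsub (tadd (tscale (q ^+ 2 * c) (tone F)) (tscale hbar v)) (tmul v v))).
Proof.
apply: (in_ideal_eq _ (in_idealD (in_idealZ (q ^+ 2 / (q ^+ 2 + 1) ^+ 2) (in_ideal_gen _ 0))
                                 (in_idealZ ((q ^+ 2 + 1) ^- 2) (in_ideal_gen _ 2)))).
by solve_teq.
Qed.

Lemma w_u : AE (tmul w u) (tscale (q ^+ 2 / (q ^+ 2 + 1) ^+ 2)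
  (tsub (tsub (tscale c (tone F)) (tscale hbar v)) (tscale (q ^+ 2) (tmul v v)))).
Proof.
apply: (in_ideal_eq _ (in_idealD (in_idealZ (q ^+ 2 / (q ^+ 2 + 1) ^+ 2) (in_ideal_gen _ 0))
                                 (in_idealZ (- q ^+ 2 / (q ^+ 2 + 1) ^+ 2) (in_ideal_gen _ 2)))).
by solve_teq.
Qed.

Lemma actX_vtilde : teq (actX q vt) (tscale (- s) u). Proof. by solve_teq. Qed.
Lemma actY_vtilde : teq (actY q vt) (tscale s w). Proof. by solve_teq. Qed.
Lemma actEp_vtilde : teq (actEp q vt) vt. Proof. by solve_teq. Qed.
Lemma actEm_vtilde : teq (actEm q vt) vt. Proof. by solve_teq. Qed.
Lemma actX_one : teq (actX q (tone F)) (tzero F). Proof. by solve_teq. Qed.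
Lemma actY_one : teq (actY q (tone F)) (tzero F). Proof. by solve_teq. Qed.
Lemma actEp_one : teq (actEp q (tone F)) (tone F). Proof. by solve_teq. Qed.
Lemma actEm_one : teq (actEm q (tone F)) (tone F). Proof. by solve_teq. Qed.
Lemma actX_w : teq (actX q w) v. Proof. by solve_teq. Qed.
Lemma actY_u : teq (actY q u) (tscale (-1) v). Proof. by solve_teq. Qed.
Lemma actEm_w : teq (actEm q w) (tscale q w). Proof. by solve_teq. Qed.
Lemma actEm_u : teq (actEm q u) (tscale q^-1 u). Proof. by solve_teq. Qed.
Lemma v_vtilde : teq v (tadd vt (tscale a (tone F))). Proof. by solve_teq. Qed.

Lemma in_ideal_actX t : I t -> I (actX q t).
Proof.
apply: in_ideal_twisted (actX_linear q) (@actX_mul _ q) _ t => i.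
by have [] := gens_stable i.
Qed.

Lemma in_ideal_actY t : I t -> I (actY q t).
Proof.
apply: in_ideal_twisted (actY_linear q) (@actY_mul _ q) _ t => i.
by have [] := gens_stable i.
Qed.

Global Instance actX_Aeq : Proper (AE ==> AE) (actX q).
Proof.
move=> A A' /in_ideal_actX; rewrite AeqE; apply: in_ideal_eq.
by have [_ XD XZ] := actX_linear q; rewrite /tsub XD XZ; reflexivity.
Qed.

Global Instance actY_Aeq : Proper (AE ==> AE) (actY q).
Proof.
move=> A A' /in_ideal_actY; rewrite AeqE; apply: in_ideal_eq.
by have [_ YD YZ] := actY_linear q; rewrite /tsub YD YZ; reflexivity.
Qed.

Local Notation V n := (tpow vt n).

Lemma actEp_vtpow n : teq (actEp q (V n)) (V n).
Proof.
elim: n => [|n IH]; first exact: actEp_one.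
by rewrite tpowS actEp_mul IH actEp_vtilde; reflexivity.
Qed.

Lemma actEm_vtpow n : teq (actEm q (V n)) (V n).
Proof.
elim: n => [|n IH]; first exact: actEm_one.
by rewrite tpowS actEm_mul IH actEm_vtilde; reflexivity.
Qed.

Lemma actX_vtpowS n :
  AE (actX q (V n.+1)) (tscale (- s * \sum_(i < n.+1) (q ^+ 2) ^+ i) (tmul u (V n))).
Proof.
elim: n => [|n IH].
  rewrite tpowS actX_mul actX_one tmul0r actX_vtilde actEp_one tmulZl.
  by rewrite big_ord1 expr0 mulr1; reflexivity.
rewrite tpowS actX_mul actEm_vtilde actEp_vtpow actX_vtilde IH tmulZr tmulZl.
rewrite -(tmulA vt u) vt_u tmulZl (tmulA u vt) -tpowS tscaleA -tscaleDl.
by apply/teq_Aeq/tscale_teq; [rewrite (geom_sumS _ n.+1); ring | reflexivity].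
Qed.

Lemma actY_vtpowS n :
  AE (actY q (V n.+1)) (tscale (s * \sum_(i < n.+1) (q ^- 2) ^+ i) (tmul w (V n))).
Proof.
elim: n => [|n IH].
  rewrite tpowS actY_mul actY_one tmul0r actY_vtilde actEp_one tmulZl.
  by rewrite big_ord1 expr0 mulr1; reflexivity.
rewrite tpowS actY_mul actEm_vtilde actEp_vtpow actY_vtilde IH tmulZr tmulZl.
rewrite -(tmulA vt w) vt_w tmulZl (tmulA w vt) -tpowS tscaleA -tscaleDl.
by apply/teq_Aeq/tscale_teq; [rewrite (geom_sumS _ n.+1); ring | reflexivity].
Qed.

Lemma actXY_vtpowS n : AE (actX q (actY q (V n.+1)))
  (tscale (s * \sum_(i < n.+1) (q ^- 2) ^+ i)
          (tadd (tscale q (tmul w (actX q (V n)))) (tmul v (V n)))).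
Proof.
have [_ _ XZ] := actX_linear q.
by rewrite actY_vtpowS XZ actX_mul actEm_w actX_w actEp_vtpow tmulZl; reflexivity.
Qed.

Lemma actYX_vtpowS n : AE (actY q (actX q (V n.+1)))
  (tscale (- s * \sum_(i < n.+1) (q ^+ 2) ^+ i)
          (tadd (tscale q^-1 (tmul u (actY q (V n)))) (tscale (-1) (tmul v (V n))))).
Proof.
have [_ _ YZ] := actY_linear q.
by rewrite actX_vtpowS YZ actY_mul actEm_u actY_u actEp_vtpow !tmulZl; reflexivity.
Qed.

Lemma actK_weight0 t : teq (actEp q t) t -> teq (actEm q t) t ->
  teq (actK q t) (tscale (q / 2) (tadd (actX q (actY q t)) (actY q (actX q t)))).
Proof.
move=> Ep_t Em_t; rewrite /actK !Ep_t !Em_t.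
by apply/teqP => x; rewrite !(tcoefD, tcoefZ); ring.
Qed.

Lemma v_vtpow n : teq (tmul v (V n)) (tadd (V n.+1) (tscale a (V n))).
Proof. by rewrite v_vtilde tmulDl tmulZl tmul1l -tpowS; reflexivity. Qed.

Lemma vv_vtpow n : teq (tmul (tmul v v) (V n))
  (tadd (V n.+2) (tadd (tscale (2 * a) (V n.+1)) (tscale (a ^+ 2) (V n)))).
Proof.
rewrite tmulA v_vtpow tmulDr tmulZr !v_vtpow.
by apply/teqP => x; rewrite !(tcoefD, tcoefZ); ring.
Qed.

Lemma u_w_vtpow n : AE (tmul u (tmul w (V n))) (tscale ((q ^+ 2 + 1) ^- 2)
  (tadd (tscale (q ^+ 2 * c + hbar * a - a ^+ 2) (V n))
        (tadd (tscale (hbar - 2 * a) (V n.+1)) (tscale (-1) (V n.+2))))).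
Proof.
rewrite -tmulA u_w; apply: teq_Aeq.
rewrite tmulZl /tsub !tmulDl !tmulZl tmul1l v_vtpow vv_vtpow.
by apply/teqP => x; rewrite !(tcoefD, tcoefZ); ring.
Qed.

Lemma w_u_vtpow n : AE (tmul w (tmul u (V n))) (tscale (q ^+ 2 / (q ^+ 2 + 1) ^+ 2)
  (tadd (tscale (c - hbar * a - q ^+ 2 * a ^+ 2) (V n))
        (tadd (tscale (- hbar - 2 * q ^+ 2 * a) (V n.+1)) (tscale (- q ^+ 2) (V n.+2))))).
Proof.
rewrite -tmulA w_u; apply: teq_Aeq.
rewrite tmulZl /tsub !tmulDl !tmulZl tmul1l v_vtpow vv_vtpow.
by apply/teqP => x; rewrite !(tcoefD, tcoefZ); ring.
Qed.

Lemma actK_vtpow0 : AE (actK q (vtpow q hbar 0)) (rhs q hbar c 0).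
Proof.
rewrite /rhs (_ : beta q 0 = 0); last by rewrite /beta mulr0 expr0 subrr mul0r.
rewrite mulr0 tscale0 (actK_weight0 (actEp_vtpow 0) (actEm_vtpow 0)).
rewrite actY_one actX_one (tlinear0 (actX_linear q)) (tlinear0 (actY_linear q)).
by apply/teq_Aeq/teqP => x; rewrite tcoefZ tcoefD !tcoef0 addr0 mulr0.
Qed.

Lemma actK_vtpow1 : AE (actK q (vtpow q hbar 1)) (rhs q hbar c 1).
Proof.
rewrite /rhs (_ : 1%:Z - 1 = 0%:Z) // (_ : 1%:Z - 2 = Negz 0) //.
rewrite (actK_weight0 (actEp_vtpow 1) (actEm_vtpow 1)) actXY_vtpowS actYX_vtpowS.
rewrite actX_one actY_one !tmul0r v_vtpow; apply: teq_Aeq.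
change (vtpow q hbar (Posz 1)) with (V 1); change (vtpow q hbar (Posz 0)) with (V 0).
move: (V 0) (V 1) => X0 X1.
apply/teqP => x; rewrite !(tcoefD, tcoefZ, tcoefB) !tcoef0.
rewrite /beta exprz_2n_sub1 // !exprz_2n muln1 !big_ord1 !expr0 /ctilde /aa.
have q2_1 : q ^+ 2 - 1 != 0 by rewrite -opprB oppr_eq0.
by field; rewrite q_neq0 q2_neq1 two_neq0 q2_1.
Qed.

Lemma actK_vtpowSS m : AE (actK q (vtpow q hbar m.+2)) (rhs q hbar c m.+2).
Proof.
rewrite /rhs.
have -> : (m.+2)%:Z - 1 = (m.+1)%:Z by rewrite -addn1 PoszD addrK.
have -> : (m.+2)%:Z - 2 = m%:Z by rewrite -addn2 PoszD addrK.
rewrite (actK_weight0 (actEp_vtpow _) (actEm_vtpow _)).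
rewrite actXY_vtpowS actYX_vtpowS actX_vtpowS actY_vtpowS !tmulZr.
rewrite w_u_vtpow u_w_vtpow v_vtpow; apply: teq_Aeq.
change (vtpow q hbar m.+2) with (V m.+2); change (vtpow q hbar m.+1) with (V m.+1).
change (vtpow q hbar m) with (V m).
move: (V m) (V m.+1) (V m.+2) => X0 X1 X2.
apply/teqP => x; rewrite !(tcoefD, tcoefZ, tcoefB).
have q2_1 : q ^+ 2 != 1 by rewrite eq_sym -subr_eq0.
have qV2_1 : q ^- 2 != 1 by rewrite invr_eq1.
rewrite /beta exprz_2n_sub1 // -PoszD addn1 !exprz_2n exprM !geom_sumE // !exprVn.
rewrite !(exprS (q ^+ 2)) /ctilde /aa.
have : (q ^+ 2) ^+ m != 0 by rewrite !expf_neq0.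
move: ((q ^+ 2) ^+ m) => Q Q_neq0.
by field; rewrite Q_neq0 q_neq0 q2_neq1 q2_neqN1 two_neq0 subr_eq0 q2_1.
Qed.

Lemma actK_vtpow (k : nat) : AE (actK q (vtpow q hbar k)) (rhs q hbar c k).
Proof.
by case: k => [|[|m]]; [exact: actK_vtpow0 | exact: actK_vtpow1 | exact: actK_vtpowSS].
Qed.

End Casimir.

Theorem proposition1 (q hbar c : CC) (hq0 : q != 0)
    (hgen : forall n : nat, (0 < n)%N -> q ^+ n != 1) (k : nat) :
  Aeq q hbar c (actK q (vtpow q hbar (k%:Z))) (rhs q hbar c k).
Proof.
have q2_neq1 : 1 - q ^+ 2 != 0 by rewrite subr_eq0 eq_sym hgen.
have q2_neqN1 : q ^+ 2 + 1 != 0.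
  apply: contraNneq (hgen 4%N isT) => /eqP; rewrite addr_eq0 => /eqP q2_N1.
  by rewrite (exprM q 2 2) q2_N1 sqrrN expr1n.
have two_neq0 : (2 : CC) != 0 by rewrite pnatr_eq0.
exact: actK_vtpow.
Qed.
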